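(* For every $n\ge1$, $R_n=\inf_{\mathbb{P}\in\mathcal{C}_n}R_n(\mathbb{P})$.
   Context: Scheduling on two machines with $n$ tasks. A processing-time matrix is $T\in\mathbb{R}_{++}^{2\times n}$; an allocation is $X\in\{0,1\}^{2\times n}$ with $X_{1j}+X_{2j}=1$; makespan $M(X,T)=\max_{i\in\{1,2\}}\sum_jX_{ij}T_{ij}$; $M^*(T)=\min_XM(X,T)$. $\mathcal{P}_n$ is the set of Borel probability measures on $\mathbb{R}^n$ supported in $\mathbb{R}_{++}^n$. For $\mathbb{P}\in\mathcal{P}_n$, algorithm $\mathcal{A}^{\mathbb{P}}$ draws $\mathbf{z}\sim\mathbb{P}$ and sends task $j$ to machine 1 iff $T_{1j}/T_{2j}<z_j$ (else to machine 2); $M(\mathbb{P},T)$ is its expected makespan, $R_n(\mathbb{P})=\sup_TM(\mathbb{P},T)/M^*(T)\in[1,\infty]$, and $R_n=\inf_{\mathbb{P}\in\mathcal{P}_n}R_n(\mathbb{P})$. $\mathcal{C}_n$ is the set of $\mathbb{P}\in\mathcal{P}_n$ invariant under permutations of coordinates: for every permutation $\pi$ of $[n]$, if $\mathbf{z}\sim\mathbb{P}$ then $(z_{\pi(1)},\dots,z_{\pi(n)})\sim\mathbb{P}$. *)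

From HB Require Import structures.
From mathcomp Require Import all_boot all_order all_algebra all_fingroup.
From mathcomp Require Import all_classical all_reals all_analysis.
Set Implicit Arguments. Unset Strict Implicit. Unset Printing Implicit Defensive.
Import Order.TTheory GRing.Theory Num.Theory.
Local Open Scope classical_set_scope.
Local Open Scope ring_scope.

Section Sched.
Variable R : realType.
Variable n : nat.

Definition mach1 : 'I_2 := ord0.
Definition mach2 : 'I_2 := ord_max.

Definition posmat (T : 'M[R]_(2, n)) : Prop := forall i j, 0 < T i j.

(* An allocation X in {0,1}^{2xn} with X_1j + X_2j = 1 is encoded by the
   boolean vector x with x j = true iff X_1j = 1 (task j on machine 1). *)
Definition makespan (x : 'I_n -> bool) (T : 'M[R]_(2, n)) : R :=
  Num.max (\sum_(j < n | x j) T mach1 j) (\sum_(j < n | ~~ x j) T mach2 j).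

Definition opt_makespan (T : 'M[R]_(2, n)) : R :=
  \big[Num.min/makespan (fun _ => true) T]_(x : {ffun 'I_n -> bool})
     makespan x T.

Definition alg_alloc (T : 'M[R]_(2, n)) (z : n.-tuple R) : 'I_n -> bool :=
  fun j => T mach1 j / T mach2 j < tnth z j.

Definition exp_makespan (P : probability (n.-tuple R) R) (T : 'M[R]_(2, n))
  : \bar R :=
  (\int[P]_z (makespan (alg_alloc T z) T)%:E)%E.

Definition ratio (P : probability (n.-tuple R) R) : \bar R :=
  ereal_sup [set (exp_makespan P T * ((opt_makespan T)^-1)%:E)%E
            | T in posmat].

Definition supported_pos (P : probability (n.-tuple R) R) : Prop :=
  P [set z : n.-tuple R | forall j, 0 < tnth z j] = 1%E.

Definition perm_tuple (s : {perm 'I_n}) (z : n.-tuple R) : n.-tuple R :=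
  [tuple tnth z (s i) | i < n].

Definition sym_supported (P : probability (n.-tuple R) R) : Prop :=
  supported_pos P /\
  forall (s : {perm 'I_n}) (A : set (n.-tuple R)), measurable A ->
    P (perm_tuple s @^-1` A) = P A.

Definition Rn : \bar R := ereal_inf [set ratio P | P in supported_pos].

Definition Rn_sym : \bar R := ereal_inf [set ratio P | P in sym_supported].

End Sched.

From Pilot Require Import Defs.
From HB Require Import structures.
From mathcomp Require Import all_boot all_order all_algebra all_fingroup.
From mathcomp Require Import all_classical all_reals all_analysis measurable_realfun.
Set Implicit Arguments. Unset Strict Implicit. Unset Printing Implicit Defensive.
Import Order.TTheory GRing.Theory Num.Theory.
Local Open Scope classical_set_scope.
Local Open Scope ring_scope.

(* Averaging P over its pushforwards by the n! coordinate permutations gives a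
   permutation-invariant distribution.  Drawing the thresholds permuted by s is
   the same as running A^P on the instance with columns permuted by s^-1, and
   M^* does not see column permutations, so on every instance the ratio of the
   averaged algorithm is a mean of ratios of A^P, hence at most R_n(P). *)

Section finite_average.
Local Open Scope ereal_scope.
Context (R : realType) (I : finType).
Hypothesis I_gt0 : (0 < #|I|)%N.

Lemma avge_cst (x : \bar R) : (#|I|%:R^-1)%:E * \sum_(i : I) x = x.
Proof.
have -> : \sum_(i : I) x = #|I|%:R%:E * x by rewrite sumr_const mule_natl.
by rewrite muleA -EFinM mulVf ?mul1e // pnatr_eq0 -lt0n.
Qed.

Lemma avge_le (f : I -> \bar R) (r : \bar R) :
  (forall i, f i <= r) -> (#|I|%:R^-1)%:E * \sum_i f i <= r.
Proof.
move=> fr; rewrite -[leRHS]avge_cst.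
by apply: lee_wpmul2l; [rewrite lee_fin invr_ge0 ler0n | exact: lee_sum].
Qed.

End finite_average.

Section integral_finite_range.
Local Open Scope ereal_scope.
Context d (X : measurableType d) (R : realType) (mu : {measure set X -> \bar R}).

Lemma ge0_integral_comp_fin (J : finType) (lab : X -> J) (c : J -> R) :
  (forall j, measurable (lab @^-1` [set j])) -> (forall j, (0 <= c j)%R) ->
  \int[mu]_x (c (lab x))%:E = \sum_j (c j)%:E * mu (lab @^-1` [set j]).
Proof.
move=> mlab c0.
have cE x : c (lab x) = (\sum_j c j * \1_(lab @^-1` [set j]) x)%R.
  rewrite (bigD1 (lab x)) //= big1 ?addr0; first by rewrite indicE mem_set // mulr1.
  by move=> j /negbTE jx; rewrite indicE memNset ?mulr0 //= => /eqP; rewrite eq_sym jx.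
under eq_integral do rewrite cE -sumEFin.
rewrite ge0_integral_sum //.
- apply: eq_bigr => j _; under eq_integral do rewrite EFinM.
  rewrite ge0_integralZl_EFin ?integral_indic ?setIT //.
  exact/measurable_EFinP/measurable_indic.
- by move=> j; apply/measurable_EFinP/measurable_funM => //; exact: measurable_indic.
- by move=> j x _; rewrite lee_fin mulr_ge0 // indicE.
Qed.

End integral_finite_range.

Section average_pushforward.
Local Open Scope ereal_scope.
Context d d' (X : measurableType d) (Y : measurableType d') (R : realType).
Context (I : finType) (f : I -> X -> Y) (P : probability X R).
Hypothesis I_gt0 : (0 < #|I|)%N.
Hypothesis mf : forall i, measurable_fun setT (f i).

Definition avg_pushforward (A : set Y) : \bar R :=
  (#|I|%:R^-1)%:E * \sum_i P (f i @^-1` A).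

Let mpre i A : measurable A -> measurable (f i @^-1` A).
Proof. by move=> mA; rewrite -[X in measurable X]setTI; exact: mf. Qed.

Let avg_pushforward0 : avg_pushforward set0 = 0.
Proof.
by rewrite /avg_pushforward big1 ?mule0 // => i _; rewrite preimage_set0 measure0.
Qed.

Let avg_pushforward_ge0 A : 0 <= avg_pushforward A.
Proof. by rewrite mule_ge0 ?lee_fin // sume_ge0. Qed.

Let avg_pushforward_semi_sigma_additive : semi_sigma_additive avg_pushforward.
Proof.
move=> F mF tF mUF; rewrite [X in _ --> X](_ : _ =
    lim ((fun k => \sum_(0 <= j < k) avg_pushforward (F j)) @ \oo)).
  by apply: is_cvg_ereal_nneg_natsum => k _; exact: avg_pushforward_ge0.
rewrite nneseriesZl => [|j _]; last exact: sume_ge0.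
rewrite nneseries_sum // /avg_pushforward; congr (_ * _); apply: eq_bigr => i _.
rewrite preimage_bigcup measure_semi_bigcup //; first by move=> j; exact: mpre.
  apply/trivIsetP => /= j k _ _ jk; rewrite -preimage_setI.
  by move/trivIsetP : tF => /(_ _ _ _ _ jk) -> //; rewrite preimage_set0.
by rewrite -preimage_bigcup; exact: mpre.
Qed.

HB.instance Definition _ := isMeasure.Build _ _ _ avg_pushforward
  avg_pushforward0 avg_pushforward_ge0 avg_pushforward_semi_sigma_additive.

Let avg_pushforward_setT : avg_pushforward setT = 1.
Proof.
rewrite /avg_pushforward; under eq_bigr do rewrite preimage_setT probability_setT.
exact: avge_cst.
Qed.

HB.instance Definition _ :=
  Measure_isProbability.Build _ _ _ avg_pushforward avg_pushforward_setT.

Definition avg_pushforward_prob : probability Y R := avg_pushforward.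

Lemma ge0_integral_avg_pushforward_comp_fin (J : finType) (lab : Y -> J) (c : J -> R) :
  (forall j, measurable (lab @^-1` [set j])) -> (forall j, (0 <= c j)%R) ->
  \int[avg_pushforward_prob]_y (c (lab y))%:E =
  (#|I|%:R^-1)%:E * \sum_i \int[P]_x (c (lab (f i x)))%:E.
Proof.
move=> mlab c0; rewrite ge0_integral_comp_fin //.
have Pcomp i : \int[P]_x (c (lab (f i x)))%:E =
    \sum_j (c j)%:E * P (f i @^-1` (lab @^-1` [set j])).
  exact: (ge0_integral_comp_fin P (lab := lab \o f i) (fun j => mpre i (mlab j)) c0).
under [X in _ = _ * X]eq_bigr do rewrite Pcomp.
rewrite exchange_big ge0_sume_distrr => [|j _]; last first.
  by apply: sume_ge0 => i _; rewrite mule_ge0 ?lee_fin.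
apply: eq_bigr => j _; rewrite /= /avg_pushforward muleCA ge0_sume_distrr //.
Qed.

End average_pushforward.

Section scheduling.
Variables (R : realType) (n : nat).
Implicit Types (T : 'M[R]_(2, n)) (s : {perm 'I_n}) (z : n.-tuple R).

Lemma perm_tupleM s t z : perm_tuple t (perm_tuple s z) = perm_tuple (t * s) z.
Proof. by apply: eq_from_tnth => i; rewrite !tnth_mktuple permM. Qed.

Lemma measurable_perm_tuple s : measurable_fun setT (@perm_tuple R n s).
Proof.
apply/measurable_fun_tnthP => i.
rewrite (_ : _ \o _ = (@tnth n R)^~ (s i)); first exact: measurable_tnth.
by apply/funext => z /=; rewrite tnth_mktuple.
Qed.

Lemma posmat_col_perm s T : posmat T -> posmat (col_perm s T).
Proof. by move=> T0 i j; rewrite mxE. Qed.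

Lemma makespan_ge0 (x : 'I_n -> bool) T : posmat T -> 0 <= makespan x T.
Proof. by move=> T0; rewrite le_max sumr_ge0 // => j _; exact/ltW. Qed.

Lemma makespan_col_perm s (x : 'I_n -> bool) T :
  makespan (x \o s) (col_perm s T) = makespan x T.
Proof.
by rewrite /makespan; congr Num.max;
  rewrite [in RHS](reindex_inj (@perm_inj _ s)); apply: eq_bigr => j _; rewrite mxE.
Qed.

Lemma alg_alloc_col_perm s T z :
  alg_alloc (col_perm s T) (perm_tuple s z) = alg_alloc T z \o s.
Proof. by apply/funext => j; rewrite /alg_alloc /= !mxE tnth_mktuple. Qed.

Lemma makespan_alg_alloc_perm_tuple s T z :
  makespan (alg_alloc T (perm_tuple s z)) T =
  makespan (alg_alloc (col_perm s^-1 T) z) (col_perm s^-1 T).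
Proof.
have {1 2}-> : T = col_perm s (col_perm s^-1 T) by rewrite -col_permM mulgV col_perm1.
by rewrite alg_alloc_col_perm makespan_col_perm.
Qed.

Lemma opt_makespan_le T (x : 'I_n -> bool) : opt_makespan T <= makespan x T.
Proof.
have -> : x = [ffun j => x j] by apply/funext => j; rewrite ffunE.
exact: bigmin_le.
Qed.

Lemma opt_makespan_col_perm s T : opt_makespan (col_perm s T) = opt_makespan T.
Proof.
suff le_opt s' T' : opt_makespan (col_perm s' T') <= opt_makespan T'.
  by apply/le_anti; rewrite le_opt -{1}[T]col_perm1 -(mulVg s) col_permM le_opt.
by apply: le_bigmin => [|x _]; rewrite -(makespan_col_perm s'); exact: opt_makespan_le.
Qed.

Definition alg_alloc_ffun T z : {ffun 'I_n -> bool} := [ffun j => alg_alloc T z j].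

Lemma alg_alloc_ffunE T z : alg_alloc_ffun T z = alg_alloc T z :> ('I_n -> bool).
Proof. by apply/funext => j; rewrite ffunE. Qed.

Lemma measurable_alg_alloc_ffun T (x : {ffun 'I_n -> bool}) :
  measurable (alg_alloc_ffun T @^-1` [set x]).
Proof.
rewrite (_ : _ @^-1` _ = \bigcap_(j in [set: 'I_n]) [set z | alg_alloc T z j = x j]).
  apply: fin_bigcap_measurable => // j _.
  have := measurable_fun_ltr (measurable_cst (T mach1 j / T mach2 j)) (measurable_tnth j).
  by move=> /(_ measurableT [set x j]); rewrite setTI; apply.
apply/seteqP; split => z /=.
  by move=> <- j _; rewrite ffunE.
by move=> zx; apply/ffunP => j; rewrite ffunE zx.
Qed.

Lemma card_perm_gt0 : (0 < #|{perm 'I_n}|)%N.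
Proof. by apply/card_gt0P; exists 1%g. Qed.

Definition sym_prob (P : probability (n.-tuple R) R) : probability (n.-tuple R) R :=
  avg_pushforward_prob P card_perm_gt0 measurable_perm_tuple.

Section symmetrization.
Local Open Scope ereal_scope.
Variable P : probability (n.-tuple R) R.

Lemma exp_makespan_ge0 T : posmat T -> 0 <= exp_makespan P T.
Proof. by move=> T0; apply: integral_ge0 => z _; rewrite lee_fin makespan_ge0. Qed.

Lemma exp_makespan_sym_prob T : posmat T ->
  exp_makespan (sym_prob P) T =
  (#|{perm 'I_n}|%:R^-1)%:E * \sum_s exp_makespan P (col_perm s^-1 T).
Proof.
move=> T0; rewrite /exp_makespan.
under eq_integral do rewrite -alg_alloc_ffunE.
rewrite (ge0_integral_avg_pushforward_comp_fin _ _ _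
  (lab := alg_alloc_ffun T) (c := fun x => makespan x T)) => [|x|x];
  [|exact: measurable_alg_alloc_ffun|exact: makespan_ge0].
congr (_ * _); apply: eq_bigr => s _; apply: eq_integral => z _.
by rewrite alg_alloc_ffunE makespan_alg_alloc_perm_tuple.
Qed.

Lemma sym_prob_sym : supported_pos P -> sym_supported (sym_prob P).
Proof.
move=> P_pos; split.
  rewrite /supported_pos /= /avg_pushforward -[RHS](avge_cst card_perm_gt0).
  congr (_ * _); apply: eq_bigr => s _; rewrite -[RHS]P_pos; congr (P _).
  apply/seteqP; split => z /= z_pos j.
    by have := z_pos (s^-1 j)%g; rewrite tnth_mktuple permKV.
  by rewrite tnth_mktuple.
move=> t A mA; rewrite /= /avg_pushforward; congr (_ * _).
rewrite [RHS](reindex_inj (mulgI t)) /=; apply: eq_bigr => s _; congr (P _).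
by apply/seteqP; split => z /=; rewrite perm_tupleM.
Qed.

Lemma ratio_sym_prob_le : Defs.ratio (sym_prob P) <= Defs.ratio P.
Proof.
apply: ge_ereal_sup => _ [T T0 <-].
rewrite exp_makespan_sym_prob // -muleA ge0_sume_distrl => [|s _]; last first.
  exact/exp_makespan_ge0/posmat_col_perm.
apply: (@avge_le _ _ card_perm_gt0) => s.
rewrite -(opt_makespan_col_perm s^-1 T); apply: ereal_sup_ubound.
by exists (col_perm s^-1 T) => //; exact: posmat_col_perm.
Qed.

End symmetrization.

End scheduling.

Theorem corollary2 (R : realType) (n : nat) :
  (1 <= n)%N -> Rn R n = Rn_sym R n.
Proof.
(* The argument does not need n >= 1. *)
move=> _; apply/le_anti/andP; split.
  by apply: ereal_inf_le_tmp => _ [P [P_pos _] <-]; exists P.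
apply: le_ereal_inf_tmp => _ [P P_pos <-]; apply: ge_ereal_inf.
exists (Defs.ratio (sym_prob P)); last exact: ratio_sym_prob_le.
by exists (sym_prob P) => //; exact: sym_prob_sym.
Qed.
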